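(* Let $\mathbb{K}$ be an algebraically closed field of characteristic zero and let $X$ be an irreducible affine variety with $X\cong Y\times\mathbb{A}^1$, where $Y$ is an affine variety admitting a nonzero locally nilpotent derivation of $\mathbb{K}[Y]$. Suppose that $\mathrm{HD}^*(X)\neq\mathbb{K}[X]$. Then $\mathrm{HD}^*(X)$ is not a finitely generated $\mathbb{K}$-algebra.
   Context: A derivation $\partial$ of $\mathbb{K}[X]$ is locally nilpotent (LND) if for every $a\in\mathbb{K}[X]$ there is $n$ with $\partial^n(a)=0$. An element $s\in\mathbb{K}[X]$ is a slice of an LND $\partial$ if $\partial(s)=1$. Let $\mathrm{LND}^*(X)$ be the set of LNDs of $\mathbb{K}[X]$ admitting a slice. The modified Derksen invariant $\mathrm{HD}^*(X)$ is the $\mathbb{K}$-subalgebra of $\mathbb{K}[X]$ generated by the kernels $\ker\partial$ for all $\partial\in\mathrm{LND}^*(X)$. *)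

From HB Require Import structures.
From mathcomp Require Import all_boot all_order all_algebra.
Set Implicit Arguments. Unset Strict Implicit. Unset Printing Implicit Defensive.
Import GRing.Theory.
Local Open Scope ring_scope.

(* Coordinate rings are modelled as commutative K-algebras. *)
Section Defs.
Variables (K : fieldType) (A : comAlgType K).

Definition is_derivation (d : A -> A) : Prop :=
  [/\ forall x y, d (x + y) = d x + d y,
      forall (k : K) x, d (k *: x) = k *: d x
    & forall x y, d (x * y) = x * d y + d x * y].

Definition is_LND (d : A -> A) : Prop :=
  is_derivation d /\ forall a, exists n : nat, iter n d a = 0.

Definition is_slice (d : A -> A) (s : A) : Prop := d s = 1.

Definition LND_star (d : A -> A) : Prop := is_LND d /\ exists s, is_slice d s.

Definition is_subalgebra (P : A -> Prop) : Prop :=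
  [/\ P 1, forall x y, P x -> P y -> P (x + y),
      forall x y, P x -> P y -> P (x * y)
    & forall (k : K) x, P x -> P (k *: x)].

Definition gen_subalg (S : A -> Prop) (a : A) : Prop :=
  forall P, is_subalgebra P -> (forall x, S x -> P x) -> P a.

Definition HD_star (a : A) : Prop :=
  gen_subalg (fun x => exists d, LND_star d /\ d x = 0) a.

Definition fin_gen_subalg (H : A -> Prop) : Prop :=
  exists gs : seq A, (forall g, g \in gs -> H g) /\
    (forall a, H a <-> gen_subalg (fun x => x \in gs) a).

Definition fin_gen_algebra : Prop := fin_gen_subalg (fun _ => True).

Definition is_reduced : Prop := forall (x : A) (n : nat), x ^+ n = 0 -> x = 0.

Definition is_domain : Prop := forall x y : A, x * y = 0 -> x = 0 \/ y = 0.
End Defs.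

Definition poly_alg_iso (K : fieldType) (B A : comAlgType K)
    (phi : {poly B} -> A) : Prop :=
  [/\ forall p q, phi (p + q) = phi p + phi q,
      forall p q, phi (p * q) = phi p * phi q,
      phi 1 = 1,
      forall k : K, phi ((k%:A)%:P) = k%:A
    & bijective phi].

(* Identify K[X] with K[Y][t] and write H = HD*(X).  The derivation d/dt has
   slice t and kernel K[Y], so K[Y] is contained in H.  H is stable under the
   automorphisms t |-> 2t and t |-> t + 1; in characteristic zero the first
   makes H graded in t, and the second then turns b t^j in H (j > 0) into
   b t in H.  Given a nonzero LND d of K[Y], take r with c = d r <> 0 and
   d c = 0.  For every n, d/dt - t^n d is an LND of K[X] with slice t whose
   kernel contains (n+1) r + c t^(n+1), so c t^(n+1) lies in H.  If H were
   finitely generated it would be Noetherian (Hilbert's basis theorem), so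
   c t^(n+1) = sum_(k<n) a_k c t^(k+1) for some n and a_k in H.  Comparing
   coefficients of t^(n+1) gives c = c u, where u is a sum of coefficients of
   the a_k in positive degree; since K[Y] is a domain u = 1, so t lies in H
   and H = K[X]. *)

From HB Require Import structures.
From mathcomp Require Import all_boot all_order all_algebra.
From Stdlib Require Import Classical ClassicalEpsilon Wf_nat.
From mathcomp Require Import zify ring.
Set Implicit Arguments. Unset Strict Implicit. Unset Printing Implicit Defensive.
Import GRing.Theory.
Local Open Scope ring_scope.

Section Subalgebras.
Variables (K : fieldType) (A : comAlgType K).

Section Closure.
Variables (P : A -> Prop) (subP : is_subalgebra P).

Lemma subalg1 : P 1. Proof. by case: subP. Qed.

Lemma subalgD x y : P x -> P y -> P (x + y).
Proof. by case: subP => _ + _ _; apply. Qed.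

Lemma subalgM x y : P x -> P y -> P (x * y).
Proof. by case: subP => _ _ + _; apply. Qed.

Lemma subalgZ k x : P x -> P (k *: x).
Proof. by case: subP => _ _ _; apply. Qed.

Lemma subalg_scalar k : P k%:A.
Proof. exact/subalgZ/subalg1. Qed.

Lemma subalg0 : P 0.
Proof. by rewrite -(scale0r 1); apply: subalg_scalar. Qed.

Lemma subalgN x : P x -> P (- x).
Proof. by rewrite -scaleN1r; apply: subalgZ. Qed.

Lemma subalgB x y : P x -> P y -> P (x - y).
Proof. by move=> Px Py; apply/subalgD/subalgN. Qed.

Lemma subalgX x n : P x -> P (x ^+ n).
Proof.
by move=> Px; elim: n => [|n IHn]; rewrite ?expr0 ?exprS; [apply: subalg1 | apply: subalgM].
Qed.

Lemma subalg_sum (I : Type) (r : seq I) (F : I -> A) :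
  (forall i, P (F i)) -> P (\sum_(i <- r) F i).
Proof.
by move=> PF; elim/big_rec: _ => [|i y _]; [apply: subalg0 | apply: subalgD (PF i)].
Qed.

End Closure.

Lemma gen_subalg_subalg (S : A -> Prop) : is_subalgebra (gen_subalg S).
Proof.
split=> [P subP _ | x y Sx Sy P subP SP | x y Sx Sy P subP SP | k x Sx P subP SP].
- exact: subalg1.
- by apply: subalgD => //; [apply: Sx | apply: Sy].
- by apply: subalgM => //; [apply: Sx | apply: Sy].
- by apply: subalgZ => //; apply: Sx.
Qed.

Lemma gen_subalg_mem (S : A -> Prop) x : S x -> gen_subalg S x.
Proof. by move=> Sx P _; apply. Qed.

End Subalgebras.

(* Noetherianity in sequential form: every sequence in P has a term in the
   P-ideal generated by the preceding terms. *)
Definition noetherian (R : pzRingType) (P : R -> Prop) :=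
  forall x : nat -> R, (forall k, P (x k)) ->
  exists n (r : nat -> R), (forall k, P (r k)) /\ x n = \sum_(k < n) r k * x k.

Lemma mem_mkseq (T : eqType) (f : nat -> T) n i : (i < n)%N -> f i \in mkseq f n.
Proof. by move=> lt_in; apply: map_f; rewrite mem_iota. Qed.

Lemma mkseq_subset (T : eqType) (f : nat -> T) m n :
  (m <= n)%N -> {subset mkseq f m <= mkseq f n}.
Proof.
move=> le_mn x /mapP[i]; rewrite mem_iota => lt_i ->.
by apply: mem_mkseq; apply: leq_trans le_mn.
Qed.

Lemma coef_XnM_lead (R : nzRingType) (p : {poly R}) s j :
  (0 < size p <= s)%N -> (s.-1 <= j)%N ->
  ('X^(s - size p) * p)`_j = (j == s.-1)%:R * lead_coef p.
Proof.
move=> /andP[p_gt0 le_ps] le_sj; rewrite coefXnM lead_coefE.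
set m := size p in p_gt0 le_ps *; rewrite ltnNge.
have -> /= : (s - m <= j)%N by lia.
have [->|ne_js] := eqVneq j s.-1; first by rewrite mul1r; congr _`_ _; lia.
have le_mj : (m <= j - (s - m))%N by lia.
by rewrite mul0r nth_default.
Qed.

Lemma size_sub_lead_comb (R : nzRingType) (g : nat -> {poly R}) (r : nat -> R) n :
    (0 < size (g n))%N -> (forall k, (k < n)%N -> 0 < size (g k) <= size (g n))%N ->
    lead_coef (g n) = \sum_(k < n) r k * lead_coef (g k) ->
  (size (g n - \sum_(k < n) (r k)%:P * ('X^(size (g n) - size (g k)) * g k))%R
     < size (g n))%N.
Proof.
move=> gn_gt0 size_g lc_n.
rewrite -[X in (_ < X)%N](prednK gn_gt0) ltnS; apply/leq_sizeP => j le_sj.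
rewrite coefB coef_sum.
under eq_bigr => k _ do rewrite coefCM (coef_XnM_lead (size_g k (ltn_ord k)) le_sj).
have [->|ne_js] := eqVneq j (size (g n)).-1.
  by under eq_bigr do rewrite mul1r; rewrite -lead_coefE lc_n subrr.
have lt_sj : (size (g n) <= j)%N by rewrite -(prednK gn_gt0) ltn_neqAle eq_sym ne_js.
rewrite nth_default // big1 ?subrr // => k _.
by rewrite mul0r mulr0.
Qed.

Section Noetherian.
Variables (K : fieldType) (A : comAlgType K).

Section PolyOver.
Variables (P : A -> Prop) (subP : is_subalgebra P).

Definition poly_over (p : {poly A}) := forall j, P p`_j.

Lemma poly_over0 : poly_over 0.
Proof. by move=> j; rewrite coef0; apply: subalg0. Qed.

Lemma poly_overC c : P c -> poly_over c%:P.
Proof. by move=> Pc j; rewrite coefC; case: eqP => _ //; apply: subalg0. Qed.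

Lemma poly_overXn n : poly_over 'X^n.
Proof. by move=> j; rewrite coefXn; case: eqP => _; [apply: subalg1 | apply: subalg0]. Qed.

Lemma poly_overD p q : poly_over p -> poly_over q -> poly_over (p + q).
Proof. by move=> Pp Pq j; rewrite coefD; apply: subalgD. Qed.

Lemma poly_overN p : poly_over p -> poly_over (- p).
Proof. by move=> Pp j; rewrite coefN; apply: subalgN. Qed.

Lemma poly_overM p q : poly_over p -> poly_over q -> poly_over (p * q).
Proof.
by move=> Pp Pq j; rewrite coefM; apply: subalg_sum => // i; apply: subalgM.
Qed.

Lemma poly_over_sum (I : Type) (r : seq I) (F : I -> {poly A}) :
  (forall i, poly_over (F i)) -> poly_over (\sum_(i <- r) F i).
Proof.
move=> PF; elim/big_rec: _ => [|i y _]; last exact: poly_overD (PF i).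
exact: poly_over0.
Qed.

Definition span (F : seq {poly A}) (q : {poly A}) := exists2 eta : nat -> {poly A},
  forall k, poly_over (eta k) & q = \sum_(k < size F) eta k * F`_k.

Lemma span0 F : span F 0.
Proof.
exists (fun=> 0) => [k|]; first exact: poly_over0.
by rewrite big1 // => k _; rewrite mul0r.
Qed.

Lemma spanD F p q : span F p -> span F q -> span F (p + q).
Proof.
move=> [e1 Pe1 ->] [e2 Pe2 ->]; exists (fun k => e1 k + e2 k).
  by move=> k; apply: poly_overD.
by rewrite -big_split; apply: eq_bigr => k _; rewrite mulrDl.
Qed.

Lemma spanN F q : span F q -> span F (- q).
Proof.
move=> [e Pe ->]; exists (fun k => - e k); first by move=> k; apply: poly_overN.
by rewrite -sumrN; apply: eq_bigr => k _; rewrite mulNr.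
Qed.

Lemma spanM F r q : poly_over r -> span F q -> span F (r * q).
Proof.
move=> Pr [e Pe ->]; exists (fun k => r * e k); first by move=> k; apply: poly_overM.
by rewrite mulr_sumr; apply: eq_bigr => k _; rewrite mulrA.
Qed.

Lemma span_sum F (I : Type) (r : seq I) (G : I -> {poly A}) :
  (forall i, span F (G i)) -> span F (\sum_(i <- r) G i).
Proof.
move=> FG; elim/big_rec: _ => [|i y _]; [exact: span0 | exact: spanD (FG i)].
Qed.

Lemma span_mem F q : q \in F -> span F q.
Proof.
move=> Fq; exists (fun k => (k == index q F)%:R).
  by move=> k; case: (_ == _); [apply: (poly_overXn 0) | apply: poly_over0].
have lt_qF : (index q F < size F)%N by rewrite index_mem.
rewrite (bigD1 (Ordinal lt_qF)) //= eqxx mul1r nth_index // big1 ?addr0 // => k ne_kq.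
suff /negPf-> : (k : nat) != index q F by rewrite mul0r.
exact: ne_kq.
Qed.

Lemma span_trans F G q : (forall p, p \in F -> span G p) -> span F q -> span G q.
Proof.
move=> FG [e Pe ->]; apply: span_sum => k.
by apply/spanM/FG/mem_nth.
Qed.

Lemma span_subset F G q : {subset F <= G} -> span F q -> span G q.
Proof. by move=> sFG; apply: span_trans => p /sFG /span_mem. Qed.

Lemma span_poly_over F q : (forall p, p \in F -> poly_over p) -> span F q -> poly_over q.
Proof.
move=> PF [e Pe ->]; apply: poly_over_sum => k.
by apply/poly_overM/PF/mem_nth.
Qed.

Section HilbertBasis.
Hypothesis noethP : noetherian P.
Variable f : nat -> {poly A}.
Hypotheses (f_over : forall k, poly_over (f k))
  (f_indep : forall n, ~ span (mkseq f n) (f n)).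

Let ideal q := exists m, span (mkseq f m) q.

Lemma ideal_span_mono m n q :
  (m <= n)%N -> span (mkseq f m) q -> span (mkseq f n) q.
Proof. by move=> le_mn; apply/span_subset/mkseq_subset. Qed.

Lemma idealD p q : ideal p -> ideal q -> ideal (p + q).
Proof.
move=> [m Sp] [n Sq]; exists (maxn m n); apply: spanD.
  by apply: ideal_span_mono Sp; rewrite leq_maxl.
by apply: ideal_span_mono Sq; rewrite leq_maxr.
Qed.

Lemma idealN q : ideal q -> ideal (- q).
Proof. by move=> [m Sq]; exists m; apply: spanN. Qed.

Lemma idealM r q : poly_over r -> ideal q -> ideal (r * q).
Proof. by move=> Pr [m Sq]; exists m; apply: spanM. Qed.

Lemma ideal_sum (I : Type) (r : seq I) (G : I -> {poly A}) :
  (forall i, ideal (G i)) -> ideal (\sum_(i <- r) G i).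
Proof.
move=> IG; elim/big_rec: _ => [|i y _]; last exact: idealD (IG i).
by exists 0%N; apply: span0.
Qed.

Lemma ideal_poly_over q : ideal q -> poly_over q.
Proof. by move=> [m]; apply: span_poly_over => _ /mapP[i _ ->]. Qed.

Lemma exists_outside_span F : (forall p, p \in F -> ideal p) ->
  exists2 q, ideal q & ~ span F q.
Proof.
move=> IF; have [M FM] : exists M, forall p, p \in F -> span (mkseq f M) p.
  elim: F IF => [|p F IHF] IF; first by exists 0%N.
  have [m Sp] := IF p (mem_head p F).
  have [M SF] : exists M, forall q, q \in F -> span (mkseq f M) q.
    by apply: IHF => q Fq; apply: IF; rewrite inE Fq orbT.
  exists (maxn m M) => q /predU1P[->|/SF].
    by apply: ideal_span_mono Sp; rewrite leq_maxl.
  by apply: ideal_span_mono; rewrite leq_maxr.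
exists (f M); first by exists M.+1; apply: span_mem; exact: mem_mkseq.
by move=> /(span_trans FM); apply: f_indep.
Qed.

Definition minimal F q :=
  [/\ ideal q, ~ span F q & forall q', ideal q' -> ~ span F q' -> (size q <= size q')%N].

Lemma exists_minimal F : (forall p, p \in F -> ideal p) -> exists q, minimal F q.
Proof.
move=> /exists_outside_span[q0 Iq0 nFq0].
have [|_ [[[q [Iq nFq <-]] min_q] _]] := @dec_inh_nat_subset_has_unique_least_element
  (fun s => exists q, [/\ ideal q, ~ span F q & size q = s]) (fun s => classic _).
  by exists (size q0), q0.
by exists q; split=> // q' Iq' nFq'; apply/leP/min_q; exists q'.
Qed.

Let next F := epsilon (inhabits 0) (minimal F).

Fixpoint chain n := if n is n'.+1 then rcons (chain n') (next (chain n')) else [::].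

Let g k := next (chain k).

Lemma chainE n : chain n = mkseq g n.
Proof. by elim: n => //= n IHn; rewrite mkseqS -IHn. Qed.

Lemma g_minimal n : minimal (mkseq g n) (g n).
Proof.
rewrite -chainE; apply: epsilon_spec; apply: exists_minimal.
elim: n => //= n IHn p; rewrite mem_rcons => /predU1P[->|]; last exact: IHn.
by have [] := epsilon_spec (inhabits 0) (minimal (chain n)) (exists_minimal IHn).
Qed.

Lemma size_g_gt0 n : (0 < size (g n))%N.
Proof.
rewrite size_poly_gt0; apply/eqP => g0; have [_ nSg _] := g_minimal n.
by apply: nSg; rewrite g0; apply: span0.
Qed.

Lemma size_g_mono k n : (k < n)%N -> (size (g k) <= size (g n))%N.
Proof.
move=> lt_kn; have [_ _ min_k] := g_minimal k; have [Ign nSgn _] := g_minimal n.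
by apply: min_k => // /(span_subset (mkseq_subset (ltnW lt_kn))).
Qed.

(* Cancelling the leading term of g n against those of g 0, ..., g (n-1)
   leaves a smaller element of the ideal outside their span. *)
Lemma hilbert_basis_contra : False.
Proof.
have Ig k : ideal (g k) by have [] := g_minimal k.
have [n [r [Pr lc_n]]] := noethP (fun k => ideal_poly_over (Ig k) (size (g k)).-1).
pose T k := (r k)%:P * ('X^(size (g n) - size (g k)) * g k).
have [Ign nSgn min_n] := g_minimal n.
have Ih : ideal (g n - \sum_(k < n) T k).
  apply/idealD/idealN/ideal_sum => // k.
  exact: idealM (poly_overC (Pr k)) (idealM (poly_overXn _) (Ig k)).
have nSh : ~ span (mkseq g n) (g n - \sum_(k < n) T k).
  move=> Sh; apply: nSgn; rewrite -(subrK (\sum_(k < n) T k) (g n)).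
  apply/spanD/span_sum => // k; apply: spanM (poly_overC (Pr k)) _.
  exact: spanM (poly_overXn _) (span_mem (mem_mkseq _ (ltn_ord k))).
have := min_n _ Ih nSh; rewrite leqNgt => /negP; apply.
apply: size_sub_lead_comb lc_n; first exact: size_g_gt0.
by move=> k lt_kn; rewrite size_g_gt0 size_g_mono.
Qed.

End HilbertBasis.

Theorem poly_over_noetherian : noetherian P -> noetherian poly_over.
Proof.
move=> noethP f f_over; apply: NNPP => f_dep.
apply: (hilbert_basis_contra noethP f_over) => n [eta eta_over f_n].
apply: f_dep; exists n, eta; split=> //.
by rewrite f_n size_mkseq; apply: eq_bigr => k _; rewrite nth_mkseq.
Qed.

Definition adjoin (g a : A) := exists2 p, poly_over p & a = p.[g].

Lemma adjoin_subalg g : is_subalgebra (adjoin g).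
Proof.
split=> [|x y [p Pp ->] [q Pq ->] | x y [p Pp ->] [q Pq ->] | k x [p Pp ->]].
- by exists 1; [apply: (poly_overXn 0) | rewrite hornerC].
- by exists (p + q); [apply: poly_overD | rewrite hornerD].
- by exists (p * q); [apply: poly_overM | rewrite hornerM].
- exists ((k%:A)%:P * p); last by rewrite hornerCM mulr_algl.
  exact: poly_overM (poly_overC (subalg_scalar subP k)) Pp.
Qed.

Lemma adjoin_base g x : P x -> adjoin g x.
Proof. by move=> Px; exists x%:P; [apply: poly_overC | rewrite hornerC]. Qed.

Lemma adjoin_gen g : adjoin g g.
Proof. by exists 'X; [apply: (poly_overXn 1) | rewrite hornerX]. Qed.

Lemma adjoin_min g (Q : A -> Prop) : is_subalgebra Q -> (forall x, P x -> Q x) -> Q g ->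
  forall x, adjoin g x -> Q x.
Proof.
move=> subQ PQ Qg _ [p Pp ->]; rewrite horner_coef.
apply: (subalg_sum subQ) => i.
by apply: (subalgM subQ); [apply: PQ | apply: subalgX].
Qed.

Lemma adjoin_noetherian g : noetherian P -> noetherian (adjoin g).
Proof.
move=> noethP x adj_x.
have [p p_x] := ClassicalEpsilon.choice (fun k p => poly_over p /\ x k = p.[g])
  (fun k => let: ex_intro2 p Pp xk := adj_x k in ex_intro _ p (conj Pp xk)).
have [n [eta [eta_over p_n]]] := poly_over_noetherian noethP (fun k => (p_x k).1).
exists n, (fun k => (eta k).[g]); split=> [k|]; first by exists (eta k).
rewrite (p_x n).2 p_n horner_sum; apply: eq_bigr => k _.
by rewrite hornerM -(p_x k).2.
Qed.

End PolyOver.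

Definition scalars (a : A) := exists k : K, a = k%:A.

Lemma scalars_subalg : is_subalgebra scalars.
Proof.
split=> [|_ _ [a ->] [b ->] | _ _ [a ->] [b ->] | k _ [a ->]].
- by exists 1; rewrite scale1r.
- by exists (a + b); rewrite scalerDl.
- by exists (a * b); rewrite mulr_algl scalerA.
- by exists (k * a); rewrite scalerA.
Qed.

Lemma scalars_noetherian : noetherian scalars.
Proof.
move=> x sx; have [x0_0 | x0_neq0] := eqVneq (x 0%N) 0.
  by exists 0%N, (fun=> 0); split=> [k|]; [exists 0; rewrite scale0r | rewrite big_ord0].
have [[a x0_a] [b x1_b]] := (sx 0%N, sx 1%N).
have a_neq0 : a != 0 by apply: contraNneq x0_neq0 => a0; rewrite x0_a a0 scale0r.
exists 1%N, (fun=> (b / a)%:A); split=> [k|]; first by exists (b / a).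
by rewrite big_ord1 x0_a x1_b mulr_algl scalerA mulfVK.
Qed.

Fixpoint generated (gs : seq A) : A -> Prop :=
  if gs is g :: gs' then adjoin (generated gs') g else scalars.

Lemma generated_subalg gs : is_subalgebra (generated gs).
Proof. by elim: gs => [|g gs IHgs]; [apply: scalars_subalg | apply: adjoin_subalg]. Qed.

Lemma generated_noetherian gs : noetherian (generated gs).
Proof.
elim: gs => [|g gs IHgs]; first exact: scalars_noetherian.
exact: (adjoin_noetherian (generated_subalg gs) IHgs).
Qed.

Lemma generated_mem gs g : g \in gs -> generated gs g.
Proof.
elim: gs => // h gs IHgs; rewrite inE => /predU1P[->|/IHgs gs_g].
  exact: (adjoin_gen (generated_subalg gs)).
exact: (adjoin_base (generated_subalg gs) h gs_g).
Qed.

Lemma generated_min gs (Q : A -> Prop) : is_subalgebra Q ->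
  (forall g, g \in gs -> Q g) -> forall x, generated gs x -> Q x.
Proof.
move=> subQ; elim: gs => [_ _ [k ->] | g gs IHgs Qgs]; first exact: subalg_scalar.
apply: adjoin_min => //; last by apply: Qgs; rewrite mem_head.
by apply: IHgs => h gs_h; apply: Qgs; rewrite inE gs_h orbT.
Qed.

Theorem fin_gen_noetherian (H : A -> Prop) : fin_gen_subalg H -> noetherian H.
Proof.
move=> [gs [_ H_gen]] x Hx.
have gen_x k : generated gs (x k).
  by apply: (H_gen _).1 (Hx k) _ (generated_subalg gs) _ => g /generated_mem.
have [n [r [gen_r x_n]]] := generated_noetherian gen_x.
exists n, r; split=> // k; apply/H_gen; apply: generated_min (gen_r k).
  exact: gen_subalg_subalg.
exact: gen_subalg_mem.
Qed.

End Noetherian.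

Section Derivations.
Variables (K : fieldType) (A : comAlgType K) (d : A -> A).
Hypothesis der_d : is_derivation d.

Lemma derivationD : {morph d : x y / x + y}.
Proof. by case: der_d. Qed.

Lemma derivationZ (k : K) x : d (k *: x) = k *: d x.
Proof. by case: der_d. Qed.

Lemma derivationM x y : d (x * y) = x * d y + d x * y.
Proof. by case: der_d. Qed.

Lemma derivation0 : d 0 = 0.
Proof. by have := derivationZ 0 0; rewrite !scale0r. Qed.

Lemma derivationB x y : d (x - y) = d x - d y.
Proof. by rewrite -!scaleN1r derivationD derivationZ. Qed.

Lemma derivationMn x m : d (x *+ m) = d x *+ m.
Proof. by elim: m => [|m IHm]; rewrite ?derivation0 // !mulrS derivationD IHm. Qed.

Lemma derivation_sum (I : Type) (r : seq I) (F : I -> A) :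
  d (\sum_(i <- r) F i) = \sum_(i <- r) d (F i).
Proof. exact: (big_morph d derivationD derivation0). Qed.

Lemma derivation_scalar (k : K) : d k%:A = 0.
Proof.
have d1 : d 1 = 0.
  have := derivationM 1 1; rewrite !mulr1 mul1r => d1_twice.
  by apply: (addrI (d 1)); rewrite addr0 -d1_twice.
by rewrite derivationZ d1 scaler0.
Qed.

Lemma iter_derivation0 k : iter k d 0 = 0.
Proof. by elim: k => //= k ->; rewrite derivation0. Qed.

Lemma iter_derivationB k x y : iter k d (x - y) = iter k d x - iter k d y.
Proof. by elim: k => //= k ->; rewrite derivationB. Qed.

Lemma iter_derivationMn k x m : iter k d (x *+ m) = iter k d x *+ m.
Proof. by elim: k => //= k ->; rewrite derivationMn. Qed.

End Derivations.

Lemma LND_kernel_image (K : fieldType) (A : comAlgType K) (d : A -> A) :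
  is_LND d -> (exists b, d b <> 0) -> exists r, d r <> 0 /\ d (d r) = 0.
Proof.
move=> [der_d nil_d] [b db_neq0]; have [m] := nil_d b.
elim: m b db_neq0 => [|m IHm] b db_neq0 dmb0.
  by rewrite /= in dmb0; rewrite dmb0 (derivation0 der_d) in db_neq0.
have [ddb0 | ddb_neq0] := eqVneq (d (d b)) 0; first by exists b.
by apply: (IHm (d b)); [apply/eqP | rewrite -iterSr].
Qed.

Section HDStar.
Variables (K : fieldType) (A : comAlgType K).

Lemma HD_star_subalg : is_subalgebra (@HD_star K A).
Proof. exact: gen_subalg_subalg. Qed.

Lemma HD_star_ker (d : A -> A) x : LND_star d -> d x = 0 -> HD_star x.
Proof. by move=> LNDd dx0; apply: gen_subalg_mem; exists d. Qed.

Variables (al be : A -> A).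
Hypotheses (alD : {morph al : x y / x + y}) (alM : {morph al : x y / x * y})
  (al1 : al 1 = 1) (alZ : forall k x, al (k *: x) = k *: al x)
  (alK : cancel al be) (beK : cancel be al).

Let al0 : al 0 = 0.
Proof. by apply: (addrI (al 0)); rewrite -alD !addr0. Qed.

Lemma LND_star_conj d : LND_star d -> LND_star (al \o d \o be).
Proof.
have beD : {morph be : x y / x + y} by move=> x y; apply: (can_inj alK); rewrite alD !beK.
have beM : {morph be : x y / x * y} by move=> x y; apply: (can_inj alK); rewrite alM !beK.
have beZ k x : be (k *: x) = k *: be x by apply: (can_inj alK); rewrite alZ !beK.
move=> [[[dD dZ dM] nil_d] [s ds1]]; split; last by exists (al s); rewrite /is_slice /= alK ds1.
split=> [|x]; first split=> [x y | k x | x y] /=.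
- by rewrite beD dD alD.
- by rewrite beZ dZ alZ.
- by rewrite beM dM alD !alM !beK.
have [n dn0] := nil_d (be x); exists n.
suff -> : iter n (al \o d \o be) x = al (iter n d (be x)).
  by rewrite dn0 al0.
by elim: n {dn0} => [|n /= ->]; rewrite ?beK ?alK.
Qed.

Lemma HD_star_aut a : HD_star a -> HD_star (al a).
Proof.
move=> HDa P subP P_ker; apply: (HDa (P \o al)).
  split=> [|x y Px Py | x y Px Py | k x Px] /=.
  - by rewrite al1; apply: subalg1.
  - by rewrite alD; apply: subalgD.
  - by rewrite alM; apply: subalgM.
  - by rewrite alZ; apply: subalgZ.
move=> x [d [LNDd dx0]]; apply: P_ker; exists (al \o d \o be).
by split; [apply: LND_star_conj | rewrite /= alK dx0 al0].
Qed.

End HDStar.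

Section TwistedDerivation.
Variables (K : fieldType) (B : comAlgType K) (d : B -> B).
Hypothesis LND_d : is_LND d.

Let der_d : is_derivation d. Proof. by case: LND_d. Qed.

Lemma coef_map_derivation p i : (map_poly d p)`_i = d p`_i.
Proof. by rewrite coef_map_id0 // derivation0. Qed.

Lemma map_derivationD p q : map_poly d (p + q) = map_poly d p + map_poly d q.
Proof. by apply/polyP => i; rewrite coefD !coef_map_derivation coefD derivationD. Qed.

Lemma map_derivationM p q : map_poly d (p * q) = p * map_poly d q + map_poly d p * q.
Proof.
apply/polyP => i; rewrite coefD coef_map_derivation !coefM derivation_sum // -big_split.
by apply: eq_bigr => j _; rewrite derivationM // !coef_map_derivation.
Qed.

Lemma map_derivationC b : map_poly d b%:P = (d b)%:P.
Proof.
apply/polyP => i; rewrite coef_map_derivation !coefC.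
by case: (i == 0)%N; rewrite ?derivation0.
Qed.

Lemma map_derivationXn k : map_poly d 'X^k = 0.
Proof.
apply/polyP => i; rewrite coef_map_derivation coefXn coef0.
by case: (i == k)%N; rewrite ?derivation0 // -(scale1r 1) -/(1%:A) derivation_scalar.
Qed.

Lemma LND_coef_nil (p : {poly B}) : exists m, forall j, iter m d p`_j = 0.
Proof.
elim/poly_ind: p => [|p c [m nil_p]]; first by exists 0%N => j; rewrite coef0.
have [m' nil_c] := LND_d.2 c; exists (m + m')%N => j.
rewrite -cons_poly_def coef_cons; case: (j == 0)%N.
  by rewrite iterD nil_c iter_derivation0.
by rewrite addnC iterD nil_p iter_derivation0.
Qed.

Variable n : nat.

Definition twisted_deriv p := p^`() - 'X^n * map_poly d p.

Lemma twisted_derivD p q : twisted_deriv (p + q) = twisted_deriv p + twisted_deriv q.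
Proof. by rewrite /twisted_deriv derivD map_derivationD mulrDr opprD addrACA. Qed.

Lemma twisted_derivM p q : twisted_deriv (p * q) = p * twisted_deriv q + twisted_deriv p * q.
Proof.
rewrite /twisted_deriv derivM map_derivationM.
set a := p^`(); set b := q^`(); set u := map_poly d p; set v := map_poly d q.
ring.
Qed.

Lemma twisted_derivC b : d b = 0 -> twisted_deriv b%:P = 0.
Proof. by move=> db0; rewrite /twisted_deriv derivC map_derivationC db0 mulr0 subrr. Qed.

Lemma twisted_derivX : twisted_deriv 'X = 1.
Proof. by rewrite /twisted_deriv derivX (map_derivationXn 1) mulr0 subr0. Qed.

(* Giving the coefficient d^k (p_j) the weight j + (n+1) k, [twisted_deriv]
   lowers the weight of every nonzero coefficient by one. *)
Definition vanishes_from m (p : {poly B}) :=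
  forall j k, (m <= j + n.+1 * k)%N -> iter k d p`_j = 0.

Lemma vanishes_fromS m p : vanishes_from m.+1 p -> vanishes_from m (twisted_deriv p).
Proof.
move=> vp j k le_m; rewrite /twisted_deriv coefB coef_deriv coefXnM coef_map_derivation.
rewrite iter_derivationB // iter_derivationMn // vp ?mul0rn; last by rewrite addSn.
case: ltnP => [_ | le_nj]; first by rewrite iter_derivation0 // subrr.
by rewrite -iterSr vp ?subrr //; rewrite mulnS; lia.
Qed.

Lemma vanishes_from_exists p : exists m, vanishes_from m p.
Proof.
have [m nil_p] := LND_coef_nil p; exists (size p + n.+1 * m)%N => j k le_jk.
have [lt_jp | le_pj] := ltnP j (size p); last by rewrite nth_default ?iter_derivation0.
have le_mk : (m <= k)%N by rewrite -(leq_pmul2l (ltn0Sn n)); lia.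
by rewrite -(subnK le_mk) iterD nil_p iter_derivation0.
Qed.

Lemma twisted_deriv_nil p : exists m, iter m twisted_deriv p = 0.
Proof.
have [m vp] := vanishes_from_exists p; exists m.
elim: m p vp => [|m IHm] p vp; first by apply/polyP => j; rewrite coef0; apply: (vp j 0%N).
by rewrite iterSr; apply/IHm/vanishes_fromS.
Qed.

Lemma twisted_deriv_ker r c : d r = c -> d c = 0 ->
  twisted_deriv ((r *+ n.+1)%:P + c%:P * 'X^(n.+1)) = 0.
Proof.
move=> dr dc0; apply/eqP; rewrite /twisted_deriv subr_eq0; apply/eqP.
rewrite derivD derivC add0r derivM derivC mul0r add0r derivXn /=.
rewrite map_derivationD map_derivationC derivationMn // dr map_derivationM.
rewrite map_derivationC dc0 map_derivationXn polyC0 mulr0 mul0r !addr0 polyCMn.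
by rewrite !mulrnAr mulrC.
Qed.

End TwistedDerivation.

Lemma pchar0_natr_neq0 (K : fieldType) n :
  [pchar K] =i pred0 -> (0 < n)%N -> n%:R != 0 :> K.
Proof. by move=> /pcharf0P-> /lt0n_neq0. Qed.

Lemma pchar0_exp2_neq (K : fieldType) i s :
  [pchar K] =i pred0 -> (i < s)%N -> 2%:R ^+ i != 2%:R ^+ s :> K.
Proof.
move=> K0 lt_is; have lt_2is : (2 ^ i < 2 ^ s)%N by rewrite ltn_exp2l.
rewrite -!natrX eq_sym -subr_eq0 -natrB ?(ltnW lt_2is) //.
by rewrite pchar0_natr_neq0 // subn_gt0.
Qed.

Lemma coef_comp_polyCX (R : comNzRingType) (p : {poly R}) c i :
  (p \Po (c%:P * 'X))`_i = p`_i * c ^+ i.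
Proof.
elim/poly_ind: p i => [|p a IHp] [|i]; rewrite ?comp_poly0 ?coef0 ?mul0r //.
  by rewrite comp_poly_MXaddC !coefD mulrA !coefMX !coefC /= !add0r mulr1.
by rewrite comp_poly_MXaddC !coefD mulrA !coefMX !coefC /= !addr0 coefMC IHp exprSr mulrA.
Qed.

Lemma poly_expand (R : nzSemiRingType) n (p : {poly R}) : (size p <= n)%N ->
  p = \sum_(i < n) (p`_i)%:P * 'X^i.
Proof.
move=> le_pn; rewrite (eq_bigr (fun i : 'I_n => p`_i *: 'X^i)) => [|i _]; last first.
  by rewrite mul_polyC.
rewrite -poly_def; apply/polyP => j; rewrite coef_poly; case: ltnP => // le_nj.
by rewrite nth_default // (leq_trans le_pn le_nj).
Qed.

Lemma coef1_XaddC1_exp (R : comNzRingType) j : (('X + 1) ^+ j)`_1 = j%:R :> R.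
Proof.
elim: j => [|j IHj]; first by rewrite expr0 coef1.
have c0 : (('X + 1) ^+ j : {poly R})`_0 = 1 by rewrite -horner_coef0 !hornerE ?add0r expr1n.
by rewrite exprS mulrDl mul1r coefD coefXM /= c0 IHj -natr1 addrC.
Qed.

Section PolyModel.
Variables (K : fieldType) (A B : comAlgType K).
Variables (phi : {poly B} -> A) (psi : A -> {poly B}).
Hypotheses (phiD : {morph phi : p q / p + q}) (phiM : {morph phi : p q / p * q})
  (phi1 : phi 1 = 1) (phi_scalar : forall k : K, phi (k%:A)%:P = k%:A)
  (phiK : cancel phi psi) (psiK : cancel psi phi).

Let phi0 : phi 0 = 0.
Proof. by apply: (addrI (phi 0)); rewrite -phiD !addr0. Qed.

Let phiB : {morph phi : p q / p - q}.
Proof.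
have phiN p : phi (- p) = - phi p by apply: (addrI (phi p)); rewrite -phiD !subrr.
by move=> p q; rewrite phiD phiN.
Qed.

Let psiD : {morph psi : x y / x + y}.
Proof. by move=> x y; apply: (can_inj phiK); rewrite phiD !psiK. Qed.

Let psiM : {morph psi : x y / x * y}.
Proof. by move=> x y; apply: (can_inj phiK); rewrite phiM !psiK. Qed.

Let psi_sum (I : Type) (r : seq I) (F : I -> A) :
  psi (\sum_(i <- r) F i) = \sum_(i <- r) psi (F i).
Proof.
have psi0 : psi 0 = 0 by apply: (can_inj phiK); rewrite psiK phi0.
exact: (big_morph psi psiD psi0).
Qed.

Let psiZ k x : psi (k *: x) = (k%:A)%:P * psi x.
Proof. by apply: (can_inj phiK); rewrite phiM phi_scalar !psiK mulr_algl. Qed.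

Lemma poly_model_domain : is_domain A -> is_domain B.
Proof.
move=> domA x y xy0; have : phi x%:P * phi y%:P = 0 by rewrite -phiM -polyCM xy0 phi0.
by case/domA => /(congr1 psi); rewrite -phi0 !phiK => /eqP; rewrite polyC_eq0 => /eqP;
  [left | right].
Qed.

Definition HDpoly p := HD_star (phi p).

Lemma HDpoly0 : HDpoly 0.
Proof. by rewrite /HDpoly phi0; apply: subalg0; apply: HD_star_subalg. Qed.

Lemma HDpolyD p q : HDpoly p -> HDpoly q -> HDpoly (p + q).
Proof. by rewrite /HDpoly phiD; apply: subalgD; apply: HD_star_subalg. Qed.

Lemma HDpolyB p q : HDpoly p -> HDpoly q -> HDpoly (p - q).
Proof. by rewrite /HDpoly phiB; apply: subalgB; apply: HD_star_subalg. Qed.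

Lemma HDpolyM p q : HDpoly p -> HDpoly q -> HDpoly (p * q).
Proof. by rewrite /HDpoly phiM; apply: subalgM; apply: HD_star_subalg. Qed.

Lemma HDpolyX p m : HDpoly p -> HDpoly (p ^+ m).
Proof.
move=> HDp; elim: m => [|m IHm]; last by rewrite exprS; apply: HDpolyM.
by rewrite /HDpoly expr0 phi1; apply: subalg1; apply: HD_star_subalg.
Qed.

Lemma HDpoly_sum (I : Type) (r : seq I) (F : I -> {poly B}) :
  (forall i, HDpoly (F i)) -> HDpoly (\sum_(i <- r) F i).
Proof. by move=> HDF; elim/big_rec: _ => [|i q _]; [apply: HDpoly0 | apply: HDpolyD]. Qed.

Lemma HDpoly_ker (E : {poly B} -> {poly B}) :
    {morph E : p q / p + q} -> (forall p q, E (p * q) = p * E q + E p * q) ->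
    (forall k : K, E (k%:A)%:P = 0) -> (forall p, exists m, iter m E p = 0) ->
    (exists s, E s = 1) ->
  forall p, E p = 0 -> HDpoly p.
Proof.
move=> ED EM E_scalar E_nil [s Es1] p Ep0.
apply: (@HD_star_ker _ _ (phi \o E \o psi)); last by rewrite /= phiK Ep0 phi0.
split; last by exists (phi s); rewrite /is_slice /= phiK Es1 phi1.
split=> [|a]; first split=> [a b | k a | a b] /=.
- by rewrite psiD ED phiD.
- by rewrite psiZ EM E_scalar mul0r addr0 phiM phi_scalar mulr_algl.
- by rewrite psiM EM phiD !phiM !psiK.
have [m Em0] := E_nil (psi a); exists m.
suff -> : iter m (phi \o E \o psi) a = phi (iter m E (psi a)) by rewrite Em0 phi0.
by elim: m {Em0} => [|m /= ->]; rewrite ?psiK ?phiK.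
Qed.

Lemma HDpoly_comp q q' p : q \Po q' = 'X -> q' \Po q = 'X -> HDpoly p -> HDpoly (p \Po q).
Proof.
move=> qq' q'q HDp; rewrite /HDpoly -[p in phi (p \Po q)]phiK.
apply: (HD_star_aut (al := phi \o comp_poly q \o psi) (be := phi \o comp_poly q' \o psi))
  HDp => [x y | x y | | k x | x | x] /=.
- by rewrite psiD comp_polyD phiD.
- by rewrite psiM comp_polyM phiM.
- by rewrite -phi1 phiK -polyC1 comp_polyC.
- by rewrite psiZ comp_polyM comp_polyC phiM phi_scalar mulr_algl.
- by rewrite phiK -comp_polyA qq' comp_polyXr psiK.
- by rewrite phiK -comp_polyA q'q comp_polyXr psiK.
Qed.

Lemma HDpoly_const b : HDpoly b%:P.
Proof.
apply: (@HDpoly_ker deriv) (derivC b) => [p q | p q | k | p |].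
- exact: derivD.
- by rewrite derivM addrC.
- exact: derivC.
- by exists (size p); apply: derivn_poly0.
- by exists 'X; apply: derivX.
Qed.

Lemma HDpoly_scale (lam : K) p :
  lam != 0 -> HDpoly p -> HDpoly (p \Po ((lam%:A)%:P * 'X)).
Proof.
move=> lam_neq0; apply: (HDpoly_comp (q' := ((lam^-1)%:A)%:P * 'X));
  by rewrite comp_polyM comp_polyC comp_polyX mulrA -polyCM mulr_algl scalerA
    ?mulfV ?mulVf // scale1r polyC1 mul1r.
Qed.

Hypothesis pchar0 : [pchar K] =i pred0.

Lemma HDpoly_homog p : HDpoly p -> forall j, HDpoly ((p`_j)%:P * 'X^j).
Proof.
move: {2}(size p) (leqnn (size p)) => s; elim: s p => [|s IHs] p le_ps HDp j.
  by move: le_ps; rewrite size_poly_leq0 => /eqP->; rewrite coef0 polyC0 mul0r; apply: HDpoly0.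
pose lam : K := 2%:R.
pose q := p \Po ((lam%:A)%:P * 'X) - ((lam ^+ s)%:A)%:P * p.
have coef_q i : q`_i = ((lam ^+ i - lam ^+ s)%:A) * p`_i.
  by rewrite coefB coef_comp_polyCX coefCM exprZn expr1n mulr_algr !mulr_algl scalerBl.
have HDq : HDpoly q.
  apply: HDpolyB; first by apply: HDpoly_scale; rewrite // pchar0_natr_neq0.
  exact: HDpolyM (HDpoly_const _) HDp.
have le_qs : (size q <= s)%N.
  apply/leq_sizeP => i le_si; rewrite coef_q.
  have [->|ne_is] := eqVneq i s; first by rewrite subrr scale0r mul0r.
  have lt_si : (s < i)%N by rewrite ltn_neqAle eq_sym ne_is.
  by rewrite nth_default ?mulr0 //; apply: leq_trans le_ps lt_si.
have HD_low i : (i < s)%N -> HDpoly ((p`_i)%:P * 'X^i).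
  move=> lt_is; have := HDpolyM (HDpoly_const ((lam ^+ i - lam ^+ s)^-1)%:A) (IHs q le_qs HDq i).
  rewrite coef_q mulrA -polyCM !mulr_algl scalerA mulVf ?scale1r //.
  by rewrite subr_eq0 pchar0_exp2_neq.
have [lt_js | lt_sj | ->] := ltngtP j s; first exact: HD_low.
  by rewrite nth_default ?polyC0 ?mul0r; [apply: HDpoly0 | apply: leq_trans le_ps _].
have -> : (p`_s)%:P * 'X^s = p - \sum_(i < s) (p`_i)%:P * 'X^i.
  by rewrite [X in _ = X - _](poly_expand le_ps) big_ord_recr /= addrC addrK.
by apply: HDpolyB => //; apply: HDpoly_sum => i; apply: HD_low.
Qed.

Lemma HDpoly_linear b j : HDpoly (b%:P * 'X^(j.+1)) -> HDpoly (b%:P * 'X).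
Proof.
move=> /(HDpoly_comp (q := 'X + 1) (q' := 'X - 1)) HDb.
have /HDpoly_homog/(_ 1%N) : HDpoly ((b%:P * 'X^(j.+1)) \Po ('X + 1)).
  by apply: HDb; rewrite comp_polyD comp_polyX ?rmorph1 ?rmorphN1 ?subrK ?addrK.
rewrite comp_polyM comp_polyC rmorphXn /= comp_polyX coefCM coef1_XaddC1_exp.
rewrite mulr_natr -scaler_nat => /(HDpolyM (HDpoly_const ((j.+1)%:R^-1)%:A)).
by rewrite mulrA -polyCM mulr_algl scalerA mulVf ?scale1r // pchar0_natr_neq0.
Qed.

Lemma HDpoly_kernel_monomial (d : B -> B) r n :
  is_LND d -> d (d r) = 0 -> HDpoly ((d r)%:P * 'X^(n.+1)).
Proof.
move=> LND_d ddr0; have [der_d _] := LND_d.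
have HDw : HDpoly ((r *+ n.+1)%:P + (d r)%:P * 'X^(n.+1)).
  apply: (@HDpoly_ker (twisted_deriv d n)) => [p q | p q | k | p | | ].
  - exact: twisted_derivD.
  - exact: twisted_derivM.
  - exact: twisted_derivC (derivation_scalar der_d k).
  - exact: twisted_deriv_nil.
  - by exists 'X; apply: twisted_derivX.
  - exact: twisted_deriv_ker.
by have := HDpolyB HDw (HDpoly_const (r *+ n.+1)); rewrite addrC addKr.
Qed.

Lemma HDpoly_all : HDpoly 'X -> forall p, HDpoly p.
Proof.
move=> HDX p; rewrite (poly_expand (leqnn (size p))).
by apply: HDpoly_sum => i; apply: HDpolyM (HDpoly_const _) (HDpolyX _ HDX).
Qed.

Lemma HDpoly_X_of_dependence (c : B) n (a : nat -> A) :
    is_domain B -> c != 0 -> (forall k, HD_star (a k)) ->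
    phi (c%:P * 'X^(n.+1)) = \sum_(k < n) a k * phi (c%:P * 'X^(k.+1)) ->
  HDpoly 'X.
Proof.
move=> domB c_neq0 HDa /(congr1 psi); rewrite phiK psi_sum.
move=> /(congr1 (fun p : {poly B} => p`_(n.+1))) /=.
pose u := \sum_(k < n) (psi (a k))`_(n - k).
rewrite coefCM coefXn eqxx mulr1 coef_sum => c_dep.
have c_u : c * (1 - u) = 0.
  apply/eqP; rewrite mulrBr mulr1 subr_eq0 {1}c_dep mulr_sumr; apply/eqP/eq_bigr => k _.
  rewrite psiM phiK mulrCA coefCM coefMXn; case: ltnP => [lt_nk | _]; last by rewrite subSS.
  by have := ltn_ord k; lia.
have u1 : u = 1.
  case: (domB _ _ c_u) => [c0 | /eqP]; first by rewrite c0 eqxx in c_neq0.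
  by rewrite subr_eq0 eq_sym => /eqP.
rewrite -[X in HDpoly X]mul1r -polyC1 -u1 rmorph_sum mulr_suml.
apply: HDpoly_sum => k; have := ltn_ord k; rewrite -subn_gt0.
case: (n - k)%N => // m _; apply: (HDpoly_linear (j := m)).
by apply: HDpoly_homog; rewrite /HDpoly psiK.
Qed.

End PolyModel.

Theorem theorem1 (K : closedFieldType) (charK0 : [pchar K] =i pred0)
    (A B : comAlgType K)
    (* X is an irreducible affine variety, K[X] = A *)
    (A_fg : fin_gen_algebra A) (A_dom : is_domain A)
    (* Y is an affine variety, K[Y] = B *)
    (B_fg : fin_gen_algebra B) (B_red : is_reduced B)
    (* X ≅ Y × A^1, i.e. K[X] ≅ K[Y][t] *)
    (phi : {poly B} -> A) (phi_iso : poly_alg_iso phi)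
    (* Y admits a nonzero LND *)
    (hY : exists d : B -> B, is_LND d /\ exists b, d b <> 0)
    (hHD : exists a : A, ~ HD_star a) :
  ~ fin_gen_subalg (@HD_star K A).
Proof.
move=> HD_fg; case: phi_iso => phiD phiM phi1 phi_scalar [psi phiK psiK].
have [d [LND_d d_neq0]] := hY.
have [r [dr_neq0 ddr0]] := LND_kernel_image LND_d d_neq0.
have HD_monomial k : HD_star (phi ((d r)%:P * 'X^(k.+1))).
  by apply: HDpoly_kernel_monomial ddr0.
have [n [a [HDa dependence]]] := fin_gen_noetherian HD_fg HD_monomial.
have domB : is_domain B by apply: poly_model_domain A_dom.
have HDX : HDpoly phi 'X.
  by apply: HDpoly_X_of_dependence domB _ HDa dependence => //; apply/eqP.
have [x HDx_false] := hHD; apply: HDx_false; rewrite -(psiK x).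
exact: HDpoly_all HDX (psi x).
Qed.
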